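(* Let $k\ge 2$. Suppose that $1/\epsilon\le\binom{d/2}{k-1}$ and that the failure probability $\delta<1$ is a constant. Then for $n\ge 1/\epsilon$, the space complexity of any valid For-All-Itemset-Frequency-Indicator sketch satisfies $|\mathcal{S}(n,d,k,\epsilon,\delta)|=\Omega(d/\epsilon)$.
   Context: A database is $\mathcal{D}\in(\{0,1\}^d)^n$ ($n$ rows, $d$ binary columns). An itemset is $T\subseteq[d]$; a $k$-itemset has $|T|=k$. A row contains $T$ if it has a 1 in every column of $T$; $f_T(\mathcal{D})$ is the fraction of rows containing $T$. A For-All-Itemset-Frequency-Indicator sketch is a pair $(\mathcal{S},\mathcal{Q})$ where $\mathcal{S}$ is a randomized algorithm mapping $(\mathcal{D},k,\epsilon,\delta)$ to a bit string (summary) and $\mathcal{Q}$ is a deterministic procedure mapping a summary and a $k$-itemset $T$ to a bit, such that for every database $\mathcal{D}$, with probability at least $1-\delta$ over the randomness of $\mathcal{S}$, simultaneously for all $k$-itemsets $T$: if $f_T>\epsilon$ then $\mathcal{Q}$ outputs 1, and if $f_T<\epsilon/2$ then $\mathcal{Q}$ outputs 0. The space complexity $|\mathcal{S}(n,d,k,\epsilon,\delta)|$ is the maximum length in bits of the summary over all $\mathcal{D}\in(\{0,1\}^d)^n$. *)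

From HB Require Import structures.
From mathcomp Require Import all_boot all_order all_algebra.
From mathcomp Require Import boolp reals.
Set Implicit Arguments. Unset Strict Implicit. Unset Printing Implicit Defensive.
Import Order.TTheory GRing.Theory Num.Theory.
Local Open Scope ring_scope.

Definition database (n d : nat) := 'M[bool]_(n, d).

Definition row_contains n d (D : database n d) (i : 'I_n) (T : {set 'I_d}) : bool :=
  [forall j in T, D i j].

Definition freq (R : realType) n d (D : database n d) (T : {set 'I_d}) : R :=
  (#|[set i : 'I_n | row_contains D i T]|%:R) / (n%:R).

Definition indicator_correct (R : realType) n d (k : nat) (eps : R)
    (Q : seq bool -> {set 'I_d} -> bool) (D : database n d) (sigma : seq bool) : Prop :=
  forall T : {set 'I_d}, #|T| = k ->
    (eps < freq R D T -> Q sigma T = true) /\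
    (freq R D T < eps / 2 -> Q sigma T = false).

(* A randomized summary algorithm with parameters (n,d,k,eps,delta) fixed is
   modelled by a finite probability space (Omega, p) of random seeds and a map
   S : database -> Omega -> seq bool.  (S,Q) is a valid
   For-All-Itemset-Frequency-Indicator sketch if for every database D, with
   probability at least 1 - delta over the seed, the summary is correct for all
   k-itemsets simultaneously. *)
Definition prob_space (R : realType) (Omega : finType) (p : Omega -> R) : Prop :=
  (forall w, 0 <= p w) /\ \sum_(w : Omega) p w = 1.

Definition valid_sketch (R : realType) n d (k : nat) (eps delta : R)
    (Omega : finType) (p : Omega -> R)
    (S : database n d -> Omega -> seq bool)
    (Q : seq bool -> {set 'I_d} -> bool) : Prop :=
  prob_space p /\
  forall D : database n d,
    1 - delta <= \sum_(w : Omega | `[< @indicator_correct R n d k eps Q D (S D w) >]) p w.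

(* s bounds the space complexity: every summary that can occur (positive
   probability) over every database has length at most s.  The space complexity
   |S(n,d,k,eps,delta)| is the least such s. *)
Definition space_bound n d (R : realType) (Omega : finType) (p : Omega -> R)
    (S : database n d -> Omega -> seq bool) (s : nat) : Prop :=
  forall (D : database n d) (w : Omega), 0 < p w -> (size (S D w) <= s)%N.

From mathcomp Require Import all_boot all_order all_algebra zify lra.
From mathcomp Require Import boolp reals.
Set Implicit Arguments. Unset Strict Implicit. Unset Printing Implicit Defensive.
Import Order.TTheory GRing.Theory Num.Theory.
Local Open Scope ring_scope.

(* An encoding argument.  Split the rows into G ~ 1/eps blocks of q > eps n
   rows and the columns into a low half and a high half of B >= d/2 columns.
   Give each block g its own (k-1)-subset of the low half (possible since
   G <= C(d/2, k-1)), and encode an arbitrary bit table f : G x B -> bool by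
   letting the rows of block g contain their low subset and the high columns b
   with f (g, b).  The k-itemset "low subset of g plus high column b" then has
   frequency > eps if f (g, b) and frequency 0 otherwise, so any correct
   summary determines f.  Hence 2^(G B) tables inject into the at most
   (s + 1) 2^s bit strings of length <= s, giving s >= G B / 2 = Omega(d/eps). *)

Section Encoding.
Variables (n d k G q : nat).

Local Notation B := (d - d./2)%N.

Lemma half_leq_self : (d./2 <= d)%N. Proof. lia. Qed.

Definition low_subsets : seq {set 'I_(d./2)} :=
  enum [set A : {set 'I_(d./2)} | #|A| == k.-1].

Definition low_set (g : nat) : {set 'I_d} :=
  widen_ord half_leq_self @: nth set0 low_subsets g.

Lemma high_col_proof (b : 'I_B) : (d./2 + b < d)%N.
Proof. have := ltn_ord b; lia. Qed.

Definition high_col (b : 'I_B) : 'I_d := Ordinal (high_col_proof b).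

Definition query_set (g : 'I_G) (b : 'I_B) : {set 'I_d} := high_col b |: low_set g.

(* Row i belongs to block i %/ q; rows with i >= G q contain no item. *)
Definition code_db (f : {ffun 'I_G * 'I_B -> bool}) : database n d :=
  \matrix_(i, j) [exists g : 'I_G, (i %/ q == g)%N &&
     ((j \in low_set g) || [exists b : 'I_B, (j == d./2 + b :> nat) && f (g, b)])].

Lemma size_low_subsets : size low_subsets = 'C(d./2, k.-1).
Proof. by rewrite -cardE card_draws card_ord. Qed.

Lemma widen_half_inj : injective (widen_ord half_leq_self).
Proof. by move=> x y /(congr1 val) /= /val_inj. Qed.

Lemma low_set_lt_half g (j : 'I_d) : j \in low_set g -> (j < d./2)%N.
Proof. by case/imsetP=> x _ ->; rewrite /= ltn_ord. Qed.

Hypotheses (blocks_le_binom : (G <= 'C(d./2, k.-1))%N) (k_ge2 : (2 <= k)%N).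

Lemma card_low_set g : (g < G)%N -> #|low_set g| = k.-1.
Proof.
move=> ltgG; rewrite card_imset; last exact: widen_half_inj.
have : nth set0 low_subsets g \in low_subsets.
  by apply: mem_nth; rewrite size_low_subsets; lia.
by rewrite mem_enum inE => /eqP.
Qed.

Lemma low_set_sub_inj g g' :
  (g < G)%N -> (g' < G)%N -> low_set g \subset low_set g' -> g = g'.
Proof.
move=> ltgG ltg'G sub.
have /eqP/(imset_inj widen_half_inj)/eqP : low_set g == low_set g'.
  by rewrite eqEcard sub (card_low_set ltgG) (card_low_set ltg'G) /=.
rewrite nth_uniq ?size_low_subsets ?enum_uniq //; [by move/eqP | lia | lia].
Qed.

Lemma card_query_set g b : #|query_set g b| = k.
Proof.
rewrite cardsU1 card_low_set //.
have -> : (high_col b \notin low_set g) = true.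
  by apply/negP => /low_set_lt_half /=; lia.
lia.
Qed.

Lemma row_contains_query_set f (g : 'I_G) (b : 'I_B) (i : 'I_n) :
  row_contains (code_db f) i (query_set g b) = ((i %/ q)%N == g) && f (g, b).
Proof.
apply/forall_inP/andP => [contains | [/eqP blk fgb] j]; last first.
  rewrite mxE; case/setU1P=> [->|j_low]; apply/existsP; exists g; rewrite blk eqxx //=.
    by apply/orP; right; apply/existsP; exists b; rewrite eqxx fgb.
  by rewrite j_low.
have := contains (high_col b) (setU11 _ _).
rewrite mxE => /existsP [g' /andP [/eqP blk]].
case/orP => [/low_set_lt_half /=| /existsP [b' /andP [/eqP eqb fg'b']]]; first lia.
have -> : b = b' by apply: ord_inj; move: eqb => /=; lia.
suff -> : g = g' by rewrite blk eqxx.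
apply: ord_inj; apply: (low_set_sub_inj (ltn_ord g) (ltn_ord g')).
apply/subsetP => j j_low.
have := contains j (setU1r _ j_low).
rewrite mxE => /existsP [g'' /andP [/eqP blk'']].
have -> : g'' = g' by apply: ord_inj; rewrite -blk'' -blk.
case/orP => // /existsP [b'' /andP [/eqP eqj _]].
have := low_set_lt_half j_low; lia.
Qed.

Hypothesis blocks_fit : (G * q <= n)%N.

Lemma block_elem_proof (g : 'I_G) (x : 'I_q) : (g * q + x < n)%N.
Proof.
have ltgG := ltn_ord g; have ltxq := ltn_ord x.
have : (g.+1 * q <= G * q)%N by rewrite leq_mul2r ltgG orbT.
rewrite mulSn; lia.
Qed.

Lemma card_block (g : 'I_G) : (q <= #|[set i : 'I_n | (i %/ q)%N == g]|)%N.
Proof.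
pose elem (x : 'I_q) : 'I_n := Ordinal (block_elem_proof g x).
have elem_inj : injective elem by move=> x y /(congr1 val) /= ?; apply: ord_inj; lia.
rewrite -[X in (X <= _)%N]card_ord -(card_imset _ elem_inj).
apply/subset_leq_card/subsetP => _ /imsetP [x _ ->].
have q_gt0 : (0 < q)%N by case: x => /= x; case: q.
by rewrite inE /= divnMDl // divn_small // addn0.
Qed.

Variables (R : realType) (eps : R).
Hypotheses (eps_gt0 : 0 < eps) (block_large : eps * n%:R < q%:R) (n_gt0 : (0 < n)%N).

Lemma freq_query_set_gt (f : {ffun 'I_G * 'I_B -> bool}) g b :
  f (g, b) -> eps < freq R (code_db f) (query_set g b).
Proof.
move=> fgb; rewrite /freq ltr_pdivlMr ?ltr0n //.
apply: (lt_le_trans block_large); rewrite ler_nat.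
apply: (leq_trans (card_block g)); apply/subset_leq_card/subsetP => i.
by rewrite !inE row_contains_query_set fgb andbT.
Qed.

Lemma freq_query_set_eq0 (f : {ffun 'I_G * 'I_B -> bool}) g b :
  ~~ f (g, b) -> freq R (code_db f) (query_set g b) = 0.
Proof.
move=> /negbTE fgb; rewrite /freq.
have -> : [set i : 'I_n | row_contains (code_db f) i (query_set g b)] = set0.
  by apply/setP => i; rewrite !inE row_contains_query_set fgb andbF.
by rewrite cards0 mul0r.
Qed.

Lemma correct_summary_decodes Q sigma (f : {ffun 'I_G * 'I_B -> bool}) g b :
  indicator_correct k eps Q (code_db f) sigma -> Q sigma (query_set g b) = f (g, b).
Proof.
move=> /(_ (query_set g b) (card_query_set g b)) [above below].
case fgb : (f (g, b)); first by apply/above/freq_query_set_gt; rewrite fgb.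
by apply: below; rewrite freq_query_set_eq0 ?fgb ?divr_gt0.
Qed.

Lemma correct_summary_determines_code Q f f' sigma :
  indicator_correct k eps Q (code_db f) sigma ->
  indicator_correct k eps Q (code_db f') sigma -> f = f'.
Proof.
move=> corr corr'; apply/ffunP => -[g b].
by rewrite -(correct_summary_decodes g b corr) (correct_summary_decodes g b corr').
Qed.

End Encoding.

Section ShortSummaries.
Variables (R : realType) (n d k : nat) (eps delta : R) (Omega : finType)
  (p : Omega -> R) (S : database n d -> Omega -> seq bool)
  (Q : seq bool -> {set 'I_d} -> bool) (s : nat).
Hypotheses (valid : valid_sketch k eps delta p S Q) (bounded : space_bound p S s).
Hypothesis delta_lt1 : delta < 1.

(* Since delta < 1, some seed of positive probability yields a correct summary;
   the fallback [::] is never used. *)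
Definition best_summary (D : database n d) : seq bool :=
  oapp (S D) [::] [pick w | `[< indicator_correct k eps Q D (S D w) >] && (0 < p w)].

Lemma best_summary_spec D :
  indicator_correct k eps Q D (best_summary D) /\ (size (best_summary D) <= s)%N.
Proof.
rewrite /best_summary; case: pickP => [w /andP [/asboolP corr p_gt0] | none] /=.
  by split => //; apply: bounded.
exfalso; case: valid => [[p_ge0 _] /(_ D)].
rewrite big1 => [|w corr].
  by rewrite subr_le0 => /(lt_le_trans delta_lt1); rewrite ltxx.
have := none w; rewrite corr /= => /negbT.
by rewrite -leNgt => p_le0; apply/eqP; rewrite eq_le p_le0 p_ge0.
Qed.

Lemma card_distinguishable_le (X : finType) (db : X -> database n d) :
  (forall x y sigma, indicator_correct k eps Q (db x) sigma ->
     indicator_correct k eps Q (db y) sigma -> x = y) ->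
  (#|X| <= s.+1 * 2 ^ s)%N.
Proof.
move=> distinct.
pose code (sigma : seq bool) : 'I_s.+1 * {ffun 'I_s -> bool} :=
  (inord (size sigma), [ffun i : 'I_s => nth false sigma i]).
have code_inj sigma tau : (size sigma <= s)%N -> (size tau <= s)%N ->
    code sigma = code tau -> sigma = tau.
  move=> sz_sigma sz_tau [eq_size /ffunP eq_bits].
  have eq_sz : size sigma = size tau.
    by have := congr1 (@nat_of_ord s.+1) eq_size; rewrite !inordK ?ltnS.
  apply: (eq_from_nth (x0 := false) eq_sz) => i lt_i.
  by have := eq_bits (Ordinal (leq_trans lt_i sz_sigma)); rewrite !ffunE.
have inj : injective (fun x => code (best_summary (db x))).
  move=> x y; have [corr_x sz_x] := best_summary_spec (db x).
  have [corr_y sz_y] := best_summary_spec (db y).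
  move/code_inj => eq_summary; apply: (distinct _ _ _ corr_x).
  by rewrite eq_summary.
by have := leq_card _ inj; rewrite card_prod card_ord card_ffun card_bool card_ord.
Qed.

End ShortSummaries.

Lemma exp2_le_succ_mul_exp2 m s : (2 ^ m <= s.+1 * 2 ^ s)%N -> (m <= s + s)%N.
Proof.
move=> le_exp; rewrite -(@leq_exp2l 2) // expnD.
by apply: leq_trans le_exp _; rewrite leq_mul2r ltn_expl // orbT.
Qed.

Lemma exists_blocks (R : realType) (eps : R) n :
  0 < eps -> eps < 1 -> 1 <= eps * n%:R ->
  exists q G : nat, [/\ (G * q <= n)%N, eps * n%:R < q%:R,
                        1 < 4 * eps * G%:R & G%:R * eps <= 1].
Proof.
move=> eps_gt0 eps_lt1 en_ge1.
have n_gt0 : 0 < n%:R :> R by rewrite ltr0n -(ltr0n R); nra.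
pose q := (Num.truncn (eps * n%:R)).+1.
have q_gt : eps * n%:R < q%:R by apply: truncnS_gt.
have q_le : q%:R <= eps * n%:R + 1 by rewrite /q -natr1 lerD2r truncn_le; lra.
have q_le_n : (q <= n)%N by rewrite /q truncn_lt_nat; nra.
exists q, (n %/ q)%N; set G := (n %/ q)%N.
have Gq_le : (G * q <= n)%N by apply: leq_divM.
have Gq_lt : n%:R < (G%:R + 1) * q%:R :> R.
  by rewrite natr1 -natrM ltr_nat ltn_ceil.
have Gq_le_real : G%:R * q%:R <= n%:R :> R by rewrite -natrM ler_nat.
split => //.
- have G_ge1 : 1 <= G%:R :> R.
    by rewrite ler1n divn_gt0.
  have : (G%:R + 1) * q%:R <= (G%:R + 1) * (2 * eps * n%:R) :> R.
    by apply: ler_wpM2l; [rewrite addr_ge0 // ler0n | lra].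
  nra.
- have : G%:R * (eps * n%:R) <= n%:R :> R.
    by apply: le_trans Gq_le_real; apply: ler_wpM2l => //; exact: ltW.
  by rewrite -(ler_pM2r n_gt0); nra.
Qed.

Lemma space_ge_d_div_16eps (R : realType) (eps : R) (G B d s : nat) :
  0 < eps -> 1 < 4 * eps * G%:R -> (d <= 2 * B)%N -> (G * B <= s + s)%N ->
  1 / 16 * (d%:R / eps) <= s%:R.
Proof.
move=> eps_gt0 epsG_gt dB GB_le.
have dB_real : d%:R <= 2 * B%:R :> R by rewrite -natrM ler_nat.
have GB_real : G%:R * B%:R <= 2 * s%:R :> R by rewrite -!natrM ler_nat mul2n -addnn.
have B_ge0 : 0 <= B%:R :> R by [].
rewrite mulrA ler_pdivrMr //.
have : 2 * B%:R * 1 <= 2 * B%:R * (4 * eps * G%:R) :> R.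
  by apply: ler_wpM2l; [apply: mulr_ge0 | apply: ltW].
have : eps * (G%:R * B%:R) <= eps * (2 * s%:R) :> R by apply: ler_wpM2l => //; apply: ltW.
lra.
Qed.

Theorem theorem2 (R : realType) (delta : R) (hdelta0 : 0 <= delta) (hdelta1 : delta < 1) :
  exists (c N0 : R), 0 < c /\
  forall (k d n : nat) (eps : R),
    (2 <= k)%N ->
    0 < eps -> eps < 1 ->
    eps^-1 <= ('C(d./2, k.-1))%:R ->
    eps^-1 <= n%:R ->
    N0 <= d%:R / eps ->
    forall (Omega : finType) (p : Omega -> R)
           (S : database n d -> Omega -> seq bool)
           (Q : seq bool -> {set 'I_d} -> bool) (s : nat),
      valid_sketch k eps delta p S Q ->
      space_bound p S s ->
      c * (d%:R / eps) <= s%:R.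
Proof.
exists (1 / 16), 0; split; first lra.
move=> k d n eps k_ge2 eps_gt0 eps_lt1 binom_ge n_ge _ Omega p S Q s valid bounded.
have en_ge1 : 1 <= eps * n%:R.
  by have := ler_wpM2l (ltW eps_gt0) n_ge; rewrite mulfV // gt_eqF.
have n_gt0 : (0 < n)%N by rewrite -(ltr0n R); nra.
have [q [G [blocks_fit q_gt epsG_gt G_le]]] := exists_blocks eps_gt0 eps_lt1 en_ge1.
have G_le_binom : (G <= 'C(d./2, k.-1))%N.
  rewrite -(ler_nat R); apply: le_trans binom_ge.
  by rewrite -[eps^-1]mul1r ler_pdivlMr.
apply: (@space_ge_d_div_16eps R eps G (d - d./2)) => //; first lia.
apply: exp2_le_succ_mul_exp2.
have code_inj := correct_summary_determines_code G_le_binom k_ge2 blocks_fit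
  eps_gt0 q_gt n_gt0 (Q := Q).
have := card_distinguishable_le valid bounded hdelta1 code_inj.
by rewrite card_ffun card_bool card_prod !card_ord.
Qed.
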